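(* Let $G$ be a finite group, and let $H$ be a normal subgroup of $G$ such that $G/H$ is cyclic. Let $K$ be a subgroup with $H\le K\le G$. Then the $G$-conjugacy classes contained in $K$ whose centralizing subgroup (with respect to $H$) is $K$ are equally distributed between the cosets of $H$ in $K$; that is, for any two cosets $Hx, Hy$ of $H$ contained in $K$, the number of $G$-conjugacy classes contained in $Hx$ with centralizing subgroup $K$ equals the number of $G$-conjugacy classes contained in $Hy$ with centralizing subgroup $K$.
   Context: For $g\in G$, the centralizing subgroup of $g$ with respect to $H$ is $\Delta_g = HC_G(g)$, the subgroup generated by $H$ and the centralizer $C_G(g)$. For a conjugacy class $X$ of $G$, its centralizing subgroup is $\Delta_X=\Delta_g$ for any $g\in X$ (this is independent of the choice of $g$). Since $G/H$ is abelian, each $G$-conjugacy class lies in a single coset of $H$. *)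

From mathcomp Require Import all_boot all_fingroup all_solvable.
Set Implicit Arguments. Unset Strict Implicit. Unset Printing Implicit Defensive.
Local Open Scope group_scope.

Definition centralizing (gT : finGroupType) (G H : {set gT}) (g : gT) : {set gT} :=
  H <*> 'C_G[g].

Definition centralizing_class (gT : finGroupType) (G H X : {set gT}) : {set gT} :=
  centralizing G H (repr X).

Definition nclasses_coset (gT : finGroupType) (G H K : {set gT}) (x : gT) : nat :=
  #|[set X in classes G | (X \subset H :* x) && (centralizing_class G H X == K)]|.

From mathcomp Require Import all_boot all_fingroup all_solvable.
Set Implicit Arguments. Unset Strict Implicit. Unset Printing Implicit Defensive.
Local Open Scope group_scope.

(* Write Delta_g for the centralizing subgroup H C_G(g). By the class equation,
   |G| times the number of classes in H x with Delta = K is the sum of |C_G(g)|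
   over the g in H x with Delta_g = K, and |H| |C_G(g)| = |Delta_g| |C_H(g)|.
   So it suffices that w_K(x), the sum of |C_H(g)| over those g, depends only on
   K. If K / H is generated by H m, then K <= Delta_g iff H m meets C_G(g), and
   counting commuting pairs in H x * H m shows that the sum of |C_H(g)| over the
   g in H x with K <= Delta_g does not depend on x; downward induction on K then
   isolates w_K(x). *)

Section ClassEquation.
Variables (gT : finGroupType) (G : {group gT}).

Lemma card_cent1J a b : b \in G -> #|'C_G[a ^ b]| = #|'C_G[a]|.
Proof.
move=> bG; rewrite cent1J -{1}(normP (subsetP (normG G) b bG)) -conjIg.
exact: cardJg.
Qed.

Lemma sum_card_cent1_class X :
  X \in classes G -> (\sum_(g in X) #|'C_G[g]| = #|G|)%N.
Proof.
case/imsetP=> a aG ->.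
rewrite (eq_bigr (fun=> #|'C_G[a]|)); last by move=> _ /imsetP[b bG ->]; rewrite card_cent1J.
by rewrite sum_nat_const -index_cent1 mulnC Lagrange ?subsetIl.
Qed.

Lemma sum_card_cent1_classes (P : pred gT) :
  {in G &, forall a b, P (a ^ b) = P a} ->
  (\sum_(g in G | P g) #|'C_G[g]| =
   #|G| * #|[set X in classes G | P (repr X)]|)%N.
Proof.
move=> PJ.
have P_repr a : a \in G -> P (repr (a ^: G)) = P a.
  by move=> aG; have /imsetP[b bG ->] := mem_repr a (class_refl G a); rewrite PJ.
rewrite (partition_big (fun g => g ^: G) [in [set X in classes G | P (repr X)]]) /=;
  last by move=> g /andP[gG Pg]; rewrite inE mem_classes //= P_repr.
rewrite mulnC -sum_nat_const.
apply: eq_bigr => _ /setIdP[/imsetP[a aG ->] Pa].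
rewrite -(sum_card_cent1_class (mem_classes aG)); apply: eq_bigl => g.
apply/idP/idP=> [/andP[/andP[gG _] /eqP <-] | gaG]; first exact: class_refl.
have gG := subsetP (class_subG aG (subxx G)) g gaG.
by rewrite gG -(P_repr g gG) (class_eqP gaG) Pa eqxx.
Qed.

End ClassEquation.

Lemma sum_card_subcent1C (gT : finGroupType) (A B : {set gT}) :
  (\sum_(a in A) #|'C_B[a]| = \sum_(b in B) #|'C_A[b]|)%N.
Proof.
have cardE (S : {set gT}) a : #|'C_S[a]| = (\sum_(s in S) (s \in 'C[a]))%N.
  rewrite -sum1_card big_mkcond [RHS]big_mkcond.
  by apply: eq_bigr => s _; rewrite inE; case: (s \in S).
under eq_bigr do rewrite cardE; rewrite exchange_big /=.
by apply: eq_bigr => b _; rewrite cardE; apply: eq_bigr => a _; rewrite cent1C.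
Qed.

Lemma card_subcent1_rcoset (gT : finGroupType) (H : {group gT}) x g z :
  z \in H :* x -> z \in 'C[g] -> #|'C_(H :* x)[g]| = #|'C_H[g]|.
Proof.
move=> /rcoset_eqP <- zCg; rewrite -[RHS](card_rcoset _ z); congr #|pred_of_set _|.
by apply/setP => c; rewrite in_setI !mem_rcoset in_setI (groupMr _ (groupVr zCg)).
Qed.

Section Centralizing.
Variables (gT : finGroupType) (G H : {group gT}).
Hypothesis nsHG : H <| G.

Let sHG := normal_sub nsHG.
Let nHG := normal_norm nsHG.

Lemma rcoset_subG x : x \in G -> H :* x \subset G.
Proof. by move=> xG; rewrite -sub_rcosetV rcoset_id ?groupV. Qed.

Lemma centralizing_subG g : centralizing G H g \subset G.
Proof. by rewrite join_subG sHG subsetIl. Qed.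

Lemma centralizingE g : centralizing G H g = H * 'C_G[g].
Proof. by rewrite /centralizing norm_joinEr // subIset ?nHG. Qed.

Lemma card_centralizing g :
  (#|centralizing G H g| * #|'C_H[g]| = #|H| * #|'C_G[g]|)%N.
Proof.
by rewrite (mul_cardG H [group of 'C_G[g]]) centralizingE setIA (setIidPl sHG).
Qed.

Hypothesis abGH : abelian (G / H).

Let sG'H : G^`(1) \subset H := der1_min nHG abGH.

Lemma centralizing_normal g : centralizing G H g <| G.
Proof.
apply: sub_der1_normal (centralizing_subG g).
exact: subset_trans sG'H (joing_subl _ _).
Qed.

Lemma centralizingJ a b : b \in G -> centralizing G H (a ^ b) = centralizing G H a.
Proof.
move=> bG; have /normP <- := subsetP (normal_norm (centralizing_normal a)) b bG.
rewrite !centralizingE conjsMg cent1J conjIg.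
by rewrite (normP (subsetP nHG b bG)) (normP (subsetP (normG G) b bG)).
Qed.

(* G acts trivially on G / H, so it fixes every coset of H. *)
Lemma rcoset_normG x : x \in G -> G \subset 'N(H :* x).
Proof.
move=> xG; apply/subsetP=> b bG; apply/normP.
rewrite conjsMg conjg_set1 (normP (subsetP nHG b bG)).
apply/rcoset_eqP; rewrite mem_rcoset conjg_Rmul mulgK.
by apply: (subsetP sG'H); rewrite mem_commg ?groupV.
Qed.

Lemma mem_rcosetJ a b x : b \in G -> x \in G -> (a ^ b \in H :* x) = (a \in H :* x).
Proof. by move=> bG xG; rewrite memJ_norm // (subsetP (rcoset_normG xG)). Qed.

Lemma mul_card_nclasses_coset K x : x \in G ->
  (#|G| * nclasses_coset G H K x =
   \sum_(g in H :* x | centralizing G H g == K) #|'C_G[g]|)%N.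
Proof.
move=> xG; set P := [pred g | (g \in H :* x) && (centralizing G H g == K)].
have PJ : {in G &, forall a b, P (a ^ b) = P a}.
  by move=> a b aG bG; rewrite /= mem_rcosetJ // centralizingJ.
rewrite (eq_bigl (fun g => (g \in G) && P g)); last first.
  by move=> g; rewrite [RHS]andb_idl // => /andP[/(subsetP (rcoset_subG xG))].
rewrite sum_card_cent1_classes //; congr (_ * #|pred_of_set _|)%N.
apply/setP=> X; rewrite !inE; apply/andb_id2l => /imsetP[a aG ->].
rewrite /centralizing_class class_sub_norm ?rcoset_normG //.
have /imsetP[b bG ->] := mem_repr a (class_refl G a).
by rewrite mem_rcosetJ // centralizingJ.
Qed.

Definition coset_cent_weight (M : {set gT}) x :=
  (\sum_(g in H :* x | centralizing G H g == M) #|'C_H[g]|)%N.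

Lemma sum_card_centralizing_coset (K : {set gT}) x :
  (#|H| * \sum_(g in H :* x | centralizing G H g == K) #|'C_G[g]| =
   #|K| * coset_cent_weight K x)%N.
Proof.
rewrite /coset_cent_weight !big_distrr /=.
by apply: eq_bigr => g /andP[_ /eqP <-]; rewrite card_centralizing.
Qed.

Section GeneratedQuotient.
Variables (K : {group gT}) (m : gT).
Hypotheses (sKG : K \subset G) (mK : m \in K).
Hypothesis defKH : K / H = <[coset H m]>.

Let mG := subsetP sKG m mK.

Lemma card_gen_subcent1 g : g \in G ->
  #|'C_(H :* m)[g]| = if K \subset centralizing G H g then #|'C_H[g]| else 0%N.
Proof.
move=> gG; case: ifPn => [sKDg | ].
  have := subsetP sKDg m mK; rewrite centralizingE => /mulsgP[h c hH /setIP[_ cCg] ->].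
  by rewrite rcosetM rcoset_id //; apply: card_subcent1_rcoset (rcoset_refl H c) cCg.
apply: contraNeq; rewrite cards_eq0 => /set0Pn[c /setIP[cHm cCg]].
have cG := subsetP (rcoset_subG mG) c cHm.
rewrite -(quotientSGK (subset_trans sKG nHG) (joing_subl _ _)) defKH cycle_subG.
have <- : coset H c = coset H m by apply/rcoset_kercosetP; rewrite ?(subsetP nHG).
by apply: mem_quotient; apply: (subsetP (joing_subr _ _)); rewrite inE cG.
Qed.

Lemma card_rcoset_subcent1_gen x c : x \in K -> c \in H :* m ->
  #|'C_(H :* x)[c]| = #|'C_H[c]|.
Proof.
move=> xK cHm; have cG := subsetP (rcoset_subG mG) c cHm.
have /cycleP[k defx] : coset H x \in <[coset H m]> by rewrite -defKH mem_quotient.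
apply: (card_subcent1_rcoset (z := c ^+ k)); last by rewrite groupX ?cent1id.
have nH := subsetP nHG; have xG := subsetP sKG x xK.
apply/rcoset_kercosetP; rewrite ?groupX ?nH //.
by rewrite morphX ?nH // defx; congr (_ ^+ k); apply/rcoset_kercosetP; rewrite ?nH.
Qed.

(* Both sides count the commuting pairs (g, c) with g in H :* x and c in H :* m. *)
Lemma sum_card_subcent1_supset x : x \in K ->
  (\sum_(g in H :* x | K \subset centralizing G H g) #|'C_H[g]| =
   \sum_(c in H :* m) #|'C_H[c]|)%N.
Proof.
move=> xK; have xG := subsetP sKG x xK.
rewrite big_mkcondr /= -(eq_bigr _ (fun g gHx => card_gen_subcent1
  (subsetP (rcoset_subG xG) g gHx))).
rewrite sum_card_subcent1C; apply: eq_bigr => c cHm.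
exact: card_rcoset_subcent1_gen.
Qed.

End GeneratedQuotient.

Lemma sum_card_subcent1_supsetE (K : {set gT}) x :
  (\sum_(g in H :* x | K \subset centralizing G H g) #|'C_H[g]| =
   coset_cent_weight K x +
   \sum_(M : {group gT} | (K \proper M) && (M \subset G)) coset_cent_weight M x)%N.
Proof.
rewrite (bigID (fun g => centralizing G H g == K)) /=; congr addn.
  by apply: eq_bigl => g; case: eqP => [-> | _]; rewrite ?subxx ?andbT ?andbF.
rewrite (partition_big (fun g => (H <*> 'C_G[g])%G)
  (fun M : {group gT} => (K \proper M) && (M \subset G))) /=; last first.
  move=> g /andP[/andP[_ sKD] neDK]; rewrite -/(centralizing G H g).
  by rewrite properEneq eq_sym neDK sKD centralizing_subG.
apply: eq_bigr => M /andP[pKM _]; apply: eq_bigl => g.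
case: ((H <*> 'C_G[g])%G =P M) => [defM | neDM].
  by move: pKM; rewrite -defM properEneq eq_sym eqxx => /andP[-> ->]; rewrite !andbT.
rewrite andbF; case: eqP => [eqDM | _]; last by rewrite andbF.
by case: neDM; apply: val_inj.
Qed.

End Centralizing.

(* The terms of sum_card_subcent1_supsetE with Delta_g a proper overgroup of K
   are independent of x by induction, and so is its left-hand side. *)
Lemma coset_cent_weight_eq (gT : finGroupType) (G H K : {group gT}) x y :
  H <| G -> cyclic (G / H) -> H \subset K -> K \subset G -> x \in K -> y \in K ->
  coset_cent_weight G H K x = coset_cent_weight G H K y.
Proof.
move=> nsHG cycGH; have [n] := ubnP (#|G| - #|K|).
elim: n K x y => // n IHn K x y ltKn sHK sKG xK yK.
have [m mK defKH] : exists2 m, m \in K & K / H = <[coset H m]>.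
  have /cyclicP[u defKH] := cyclicS (quotientS H sKG) cycGH.
  have /morphimP[m _ mK defu] : u \in K / H by rewrite defKH cycle_id.
  by exists m; rewrite // defKH defu.
have := sum_card_subcent1_supset nsHG sKG mK defKH yK.
rewrite -(sum_card_subcent1_supset nsHG sKG mK defKH xK) !sum_card_subcent1_supsetE //.
rewrite (eq_bigr (fun M : {group gT} => coset_cent_weight G H M x)); first by move/addIn.
move=> M /andP[pKM sMG]; have sKM := proper_sub pKM.
apply: IHn; rewrite ?(subset_trans sHK) ?(subsetP sKM) //.
have ltKM := proper_card pKM.
by rewrite -ltnS (leq_trans _ ltKn) // ltnS ltn_sub2l // (leq_trans ltKM) ?subset_leq_card.
Qed.

Theorem theorem2p1 (gT : finGroupType) (G H K : {group gT}) :
  H <| G -> cyclic (G / H) -> H \subset K -> K \subset G ->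
  forall x y : gT, x \in K -> y \in K ->
    nclasses_coset G H K x = nclasses_coset G H K y.
Proof.
move=> nsHG cycGH sHK sKG x y xK yK.
have abGH := cyclic_abelian cycGH.
apply/eqP; rewrite -(eqn_pmul2l (cardG_gt0 G)) -(eqn_pmul2l (cardG_gt0 H)).
rewrite !mul_card_nclasses_coset ?(subsetP sKG) // !sum_card_centralizing_coset //.
by rewrite (coset_cent_weight_eq nsHG cycGH sHK sKG xK yK).
Qed.
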